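(* Suppose that there exists an integer ${}^\lambda\mathrm{H}_t(m,n;s,k)$ with $\lambda$ odd. (1) If $t$ divides $\frac{nk}{\lambda}$, then $\frac{nk}{\lambda}\equiv 0\pmod 4$ or $\frac{nk}{\lambda}\equiv -t\equiv \pm1\pmod 4$. (2) If $t=\frac{2nk}{\lambda}$, then $s$ and $k$ are both even. (3) If $t\neq\frac{2nk}{\lambda}$ and $t$ does not divide $\frac{nk}{\lambda}$, then $\frac{2nk}{\lambda}+t\equiv 0\pmod 8$.
   Context: Let $m,n,s,k,\lambda,t$ be positive integers with $t$ dividing $\frac{2nk}{\lambda}$, let $v=\frac{2nk}{\lambda}+t$ and let $J$ be the subgroup of $\mathbb{Z}_v$ of order $t$. A $\lambda$-fold Heffter array ${}^\lambda\mathrm{H}_t(m,n;s,k)$ is an $m\times n$ partially filled array with entries in $\mathbb{Z}_v$ such that: (a) each row has exactly $s$ and each column exactly $k$ filled cells; (b) the multiset $\{\pm x: x$ an entry of a filled cell$\}$ contains each element of $\mathbb{Z}_v\setminus J$ exactly $\lambda$ times and no element of $J$; (c) every row and every column sums to $0$ in $\mathbb{Z}_v$. It is called integer if, when each entry is represented by its unique integer representative in $\pm\{1,2,\dots,\lfloor v/2\rfloor\}$, every row and every column sums to $0$ in $\mathbb{Z}$. *)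

From mathcomp Require Import all_boot all_order all_algebra.
Set Implicit Arguments. Unset Strict Implicit. Unset Printing Implicit Defensive.
Import GRing.Theory Num.Theory.

(* An element of Z_v is represented by its canonical residue x : nat, x < v.
   A partially filled m x n array is A : 'I_m -> 'I_n -> option nat
   (None = empty cell). *)

Definition hv (n k lam t : nat) : nat := (2 * n * k) %/ lam + t.

(* membership of a residue y < v in the subgroup J of Z_v of order t
   (J = <v/t>, the multiples of v/t) *)
Definition inJ (v t y : nat) : bool := (v %/ t) %| y.

(* number of occurrences of y in the multiset {+-x : x an entry} *)
Definition pm_count (m n v : nat) (A : 'I_m -> 'I_n -> option nat) (y : nat) : nat :=
  \sum_(i < m) \sum_(j < n)
     match A i j with
     | Some x => ((x %% v) == y) + (((v - x %% v) %% v) == y)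
     | None => 0
     end.

Definition zrep (v x : nat) : int :=
  if (x %% v) <= v./2 then Posz (x %% v) else (Posz (x %% v) - Posz v)%R.

Definition row_cnt m n (A : 'I_m -> 'I_n -> option nat) (i : 'I_m) : nat :=
  #|[set j : 'I_n | A i j != None]|.
Definition col_cnt m n (A : 'I_m -> 'I_n -> option nat) (j : 'I_n) : nat :=
  #|[set i : 'I_m | A i j != None]|.

Definition row_sum m n (A : 'I_m -> 'I_n -> option nat) (i : 'I_m) : nat :=
  \sum_(j < n) oapp id 0 (A i j).
Definition col_sum m n (A : 'I_m -> 'I_n -> option nat) (j : 'I_n) : nat :=
  \sum_(i < m) oapp id 0 (A i j).

Definition row_zsum v m n (A : 'I_m -> 'I_n -> option nat) (i : 'I_m) : int :=
  (\sum_(j < n) oapp (zrep v) 0 (A i j))%R.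
Definition col_zsum v m n (A : 'I_m -> 'I_n -> option nat) (j : 'I_n) : int :=
  (\sum_(i < m) oapp (zrep v) 0 (A i j))%R.

Definition is_heffter (m n s k lam t : nat) (A : 'I_m -> 'I_n -> option nat) : Prop :=
  let v := hv n k lam t in
  [/\ (forall i, row_cnt A i = s),
      (forall j, col_cnt A j = k),
      (forall i j x, A i j = Some x -> x < v),
      (forall y, y < v -> pm_count v A y = if inJ v t y then 0 else lam) &
      ((forall i, row_sum A i %% v = 0) /\
      (forall j, col_sum A j %% v = 0))].

Definition is_integer_heffter (m n s k lam t : nat) (A : 'I_m -> 'I_n -> option nat) : Prop :=
  let v := hv n k lam t in
  [/\ is_heffter s k lam t A,
      (forall i, row_zsum v A i = 0%R) &
      (forall j, col_zsum v A j = 0%R)].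

From mathcomp Require Import all_boot all_order all_algebra zify.
Import GRing.Theory Num.Theory.

Set Implicit Arguments.
Unset Strict Implicit.
Unset Printing Implicit Defensive.

(* Let A be an integer lambda-fold Heffter array over Z_v, v = 2h + t with
   h = nk/lambda, lambda odd, and let J be the subgroup of order t, i.e. the
   multiples of d = v/t.  Weighting each residue y <= v/2 by y, the multiset
   {+-x} shows that the absolute values of the integer representatives of the
   entries sum to lambda * S, where S is the sum of the non-multiples of d in
   [0, v/2].  Since every row sums to 0 in Z, that total is twice the sum of
   the absolute values of the negative entries, hence even, so S is even.
   (An entry equal to v/2 is excluded: its +-pair would give v/2 an even,
   hence zero, multiplicity, while entries have positive multiplicity.)
   Parts (1) and (3) are then pure arithmetic: a closed form for S
   (sum_nonmultE and its two specialisations) turns "S even" into the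
   stated congruences.  For part (2), t = 2h makes J the even residues, so all
   entries are odd residues; a row or column of odd integers summing to 0 has
   even length. *)

Definition sum_nonmult (d N : nat) : nat :=
  \sum_(y < N.+1) (if d %| y then 0 else y).

(* All of [0, N] minus the multiples d, 2d, ..., (N/d)d of d. *)
Lemma sum_nonmultE (d N : nat) : 0 < d ->
  2 * sum_nonmult d N + d * (N %/ d) * (N %/ d).+1 = N * N.+1.
Proof.
move=> d_gt0; elim: N => [|N IH].
  by rewrite /sum_nonmult big_ord_recr big_ord0 /= dvdn0 div0n muln0.
rewrite /sum_nonmult big_ord_recr /= -/(sum_nonmult d N) (divnS N d_gt0).
case dvd_dN1: (d %| N.+1); last by rewrite add0n; lia.
have := divnK dvd_dN1; rewrite (divnS N d_gt0) dvd_dN1 add1n => eN1; lia.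
Qed.

Lemma sum_nonmult_mul (d u : nat) : 0 < d ->
  2 * sum_nonmult d (d * u) = d * d.-1 * u ^ 2.
Proof.
move=> d_gt0; have := @sum_nonmultE d (d * u) d_gt0; rewrite mulKn //; nia.
Qed.

(* The closed form for an odd modulus d = 2c + 1 and N = du + c, which is
   v/2 for v = d(2u + 1) (the case of odd t). *)
Lemma sum_nonmult_odd (c u : nat) :
  2 * sum_nonmult c.*2.+1 (c.*2.+1 * u + c) =
  2 * (c.*2.+1 * c * u * u.+1) + c * c.+1.
Proof.
have := @sum_nonmultE c.*2.+1 (c.*2.+1 * u + c) (ltn0Sn c.*2).
rewrite [c.*2.+1 * u]mulnC divnMDl // divn_small ?addn0; [nia | lia].
Qed.

Lemma mod4_of_dvd_pronic (q : nat) : 4 %| q * q.+1 -> q %% 4 = 0 \/ q %% 4 = 3.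
Proof.
move=> /dvdnP [K eK]; have := ltn_pmod q (isT : 0 < 4).
rewrite {1 2}(divn_eq q 4) in eK; move: eK.
case: (q %% 4) => [|[|[|[|]]]] //; nia.
Qed.

(* Part (1) of the theorem, as a statement about h = nk/lambda: if t | h
   then d = 2h/t + 1 is odd, and "S even" forces the congruences. *)
Lemma even_sum_divisible (h t : nat) : 0 < t -> t %| h ->
  ~~ odd (sum_nonmult ((h.*2 + t) %/ t) ((h.*2 + t)./2)) ->
  h %% 4 = 0 \/ ((h + t) %% 4 = 0 /\ (h %% 4 = 1 \/ h %% 4 = 3)).
Proof.
move=> t_gt0 /dvdnP [q ->].
have -> : (q * t).*2 + t = q.*2.+1 * t by lia.
rewrite mulnK //; have := odd_double_half t.
case: (odd t) => /= [|] et; rewrite -{}et.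
- set u := t./2.
  have -> : (q.*2.+1 * u.*2.+1)./2 = q.*2.+1 * u + q.
    by rewrite -divn2; lia.
  have := sum_nonmult_odd q u; set S := sum_nonmult _ _ => eS evenS.
  have evenP : ~~ odd (u * u.+1) by rewrite oddM /=; case: (odd u).
  have /mod4_of_dvd_pronic [q0|q3] : 4 %| q * q.+1.
    move: evenS evenP; rewrite -!dvdn2 => /dvdnP [K eK] /dvdnP [L eL].
    by apply/dvdnP; exists (K - q.*2.+1 * q * L); nia.
  + by left; rewrite -modnMml q0.
  + right; split; [rewrite -modnDml -modnMml q3 | rewrite -modnMml q3]; lia.
- set u := t./2.
  have -> : (q.*2.+1 * u.*2)./2 = q.*2.+1 * u by rewrite -divn2; lia.
  have := @sum_nonmult_mul q.*2.+1 u (ltn0Sn _); set S := sum_nonmult _ _.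
  move=> eS evenS; left.
  have eS' : S = q.*2.+1 * (q * u) * u by rewrite /= in eS; nia.
  have even_qu : ~~ odd (q * u).
    by move: evenS; rewrite eS' !oddM /= odd_double; case: (odd q); case: (odd u).
  have := odd_double_half (q * u); rewrite (negbTE even_qu) -doubleMr; lia.
Qed.

(* Part (3): if t | 2h but not t | h, then 2h/t is odd and t is even, so
   d is even and v/2 is a multiple of d; "S even" forces 8 | v. *)
Lemma even_sum_nondivisible (h t : nat) : t %| h.*2 -> ~~ (t %| h) ->
  ~~ odd (sum_nonmult ((h.*2 + t) %/ t) ((h.*2 + t)./2)) ->
  (h.*2 + t) %% 8 = 0.
Proof.
move=> /dvdnP [r e2h] t_ndvd_h.
have t_gt0 : 0 < t.
  case: t e2h t_ndvd_h => [|//]; rewrite muln0 => /eqP.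
  by rewrite double_eq0 => /eqP ->.
have odd_r : odd r.
  apply: contraNT t_ndvd_h => /negbTE even_r; apply/dvdnP; exists r./2.
  by have := odd_double_half r; rewrite even_r add0n; nia.
have even_t : ~~ odd t.
  apply: contra t_ndvd_h => odd_t.
  by rewrite -(@Gauss_dvdr _ 2) ?coprimen2 ?odd_t // mul2n e2h dvdn_mull.
have -> : h.*2 + t = r.+1 * t by rewrite e2h mulSn addnC.
rewrite mulnK //; have := odd_double_half t; rewrite (negbTE even_t) add0n => <-.
have := odd_double_half r; rewrite odd_r /= => <-; set w := r./2; set u := t./2.
have -> : (w.*2.+2 * u.*2)./2 = w.*2.+2 * u by rewrite -divn2; lia.
have := @sum_nonmult_mul w.*2.+2 u (ltn0Sn _); set S := sum_nonmult _ _ => eS.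
have -> : S = w.+1 * u * (w.*2.+1 * u) by rewrite /= in eS; nia.
move=> evenS; have even_wu : ~~ odd (w.+1 * u).
  by move: evenS; rewrite !oddM /= odd_double; case: (odd w); case: (odd u).
have := odd_double_half (w.+1 * u); rewrite (negbTE even_wu) add0n => e.
have -> : w.*2.+2 * u.*2 = 4 * (w.+1 * u) by nia.
by rewrite -e; lia.
Qed.

(* y itself if y is at most v/2, the range of absolute values of integer
   representatives, and 0 otherwise. *)
Definition small_part (v y : nat) : nat := if y <= v./2 then y else 0.

(* The absolute value of the integer representative of x when it is
   negative, and 0 otherwise. *)
Definition neg_part (v x : nat) : nat :=
  if x %% v <= v./2 then 0 else v - x %% v.

Lemma sum_ord_eq (v : nat) (g : nat -> nat) (a : nat) : a < v ->
  \sum_(y < v) g y * (a == y) = g a.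
Proof.
move=> a_lt_v; rewrite (bigD1 (Ordinal a_lt_v)) //= eqxx muln1 big1 ?addn0 //.
by move=> y /negbTE; rewrite -val_eqE /= eq_sym => ->; rewrite muln0.
Qed.

Lemma weighted_pm_count (m n v : nat) (A : 'I_m -> 'I_n -> option nat)
    (g : nat -> nat) : 0 < v ->
  \sum_(y < v) g y * pm_count v A y =
  \sum_i \sum_j oapp (fun x => g (x %% v) + g ((v - x %% v) %% v)) 0 (A i j).
Proof.
move=> v_gt0; rewrite /pm_count.
under [X in X = _]eq_bigr do rewrite big_distrr.
rewrite exchange_big; apply: eq_bigr => i _.
under [X in X = _]eq_bigr do rewrite big_distrr.
rewrite exchange_big; apply: eq_bigr => j _.
case: (A i j) => [x|] /=; last by rewrite big1 // => y _; rewrite muln0.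
by under eq_bigr do rewrite mulnDr; rewrite big_split /= !sum_ord_eq ?ltn_pmod.
Qed.

Lemma pm_count_entry (m n v : nat) (A : 'I_m -> 'I_n -> option nat) i j x :
  A i j = Some x -> 0 < pm_count v A (x %% v).
Proof. by move=> Aij; rewrite /pm_count (bigD1 i) //= (bigD1 j) //= Aij eqxx. Qed.

(* Away from v/2, exactly one of x, -x is a small residue and it equals the
   absolute value of the integer representative z of x, i.e. z + 2 neg(x). *)
Lemma small_parts_zrep (v x : nat) : 0 < v -> (x %% v).*2 != v ->
  Posz (small_part v (x %% v) + small_part v ((v - x %% v) %% v)) =
  (zrep v x + (neg_part v x).*2%:Z)%R.
Proof.
move=> v_gt0; rewrite /small_part /neg_part /zrep.
have : x %% v < v by rewrite ltn_pmod.
move: (x %% v) => a a_lt_v a_nhalf; case: (posnP a) => [->|a_gt0].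
  by rewrite subn0 modnn !leq0n.
rewrite (modn_small (_ : v - a < v)); last by lia.
by case: (leqP a v./2) => h1; case: (leqP (v - a) v./2) => h2;
  rewrite -?divn2 in h1 h2 *; lia.
Qed.

Lemma Posz_sum (I : Type) (r : seq I) (P : pred I) (F : I -> nat) :
  Posz (\sum_(i <- r | P i) F i) = (\sum_(i <- r | P i) Posz (F i))%R.
Proof. by apply: (big_morph Posz) => // a b; rewrite PoszD. Qed.

Lemma sum_small_nonJ (v t : nat) : 0 < v ->
  \sum_(y < v) (if inJ v t y then 0 else small_part v y) =
  sum_nonmult (v %/ t) v./2.
Proof.
move=> v_gt0; have half_lt : v./2 < v by rewrite -divn2 ltn_Pdiv.
rewrite /sum_nonmult (big_ord_widen v (fun y => if v %/ t %| y then 0 else y) half_lt).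
rewrite [RHS]big_mkcond; apply: eq_bigr => y _; rewrite /inJ /small_part ltnS.
by case: ifP; case: ifP.
Qed.

Section HeffterParity.

Variables (m n v lam t : nat) (A : 'I_m -> 'I_n -> option nat).
Hypothesis v_gt0 : 0 < v.
Hypothesis lam_odd : odd lam.
Hypothesis pm_countE :
  forall y, y < v -> pm_count v A y = if inJ v t y then 0 else lam.

(* No entry is v/2: its multiplicity in {+-x} would be even, hence not the
   odd lambda, and it is positive, hence not 0. *)
Lemma no_half_entry i j x : A i j = Some x -> (x %% v).*2 != v.
Proof.
move=> Aij; apply/negP => /eqP half_x.
have x_gt0 : 0 < x %% v by move: half_x v_gt0; case: (x %% v) => [<-|].
have pm_even : pm_count v A (x %% v) =
    (\sum_i \sum_j oapp (fun y => nat_of_bool (y %% v == x %% v)) 0 (A i j)).*2.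
  rewrite -mul2n big_distrr; apply: eq_bigr => i' _ /=.
  rewrite big_distrr; apply: eq_bigr => j' _ /=.
  case: (A i' j') => [y|] //=; rewrite mul2n -addnn.
  have : y %% v < v by rewrite ltn_pmod.
  move: (y %% v) (x %% v) half_x x_gt0 => b a half_a a_gt0 b_lt_v.
  case: (posnP b) => [->|b_gt0]; first by rewrite subn0 modnn; case: eqP; lia.
  by rewrite modn_small; [congr (_ + _); apply/eqP/eqP|]; lia.
have := pm_countE (ltn_pmod x v_gt0); case: ifP => _ count_x.
  by have := pm_count_entry v Aij; rewrite count_x.
by move: lam_odd; rewrite -count_x pm_even odd_double.
Qed.

Lemma entries_odd : v %/ t = 2 -> forall i j x, A i j = Some x -> odd (x %% v).
Proof.
move=> J_even i j x Aij; have := pm_count_entry v Aij.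
by rewrite pm_countE ?ltn_pmod // /inJ J_even dvdn2; case: ifP => // /negbFE.
Qed.

Hypothesis row_zsum0 : forall i, row_zsum v A i = 0%R.

(* Since the integer row sums vanish, the absolute values of all integer
   representatives add up to twice the absolute values of the negative ones. *)
Lemma small_parts_double :
  \sum_i \sum_j oapp (fun x => small_part v (x %% v) +
                              small_part v ((v - x %% v) %% v)) 0 (A i j) =
  (\sum_i \sum_j oapp (neg_part v) 0 (A i j)).*2.
Proof.
apply/eqP; rewrite -eqz_nat; apply/eqP.
have total0 : (\sum_i row_zsum v A i = 0)%R.
  by apply: big1 => i _; apply: row_zsum0.
rewrite -muln2 PoszM !Posz_sum mulr_suml -[RHS]add0r.
rewrite -[X in _ = (X + _)%R]total0 -big_split.
apply: eq_bigr => i _ /=.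
rewrite !Posz_sum mulr_suml /row_zsum -big_split; apply: eq_bigr => j _ /=.
case Aij: (A i j) => [x|] /=; last by rewrite mul0r addr0.
by rewrite small_parts_zrep ?(no_half_entry Aij) // -muln2 PoszM.
Qed.

(* The key parity fact: lambda * S is twice an integer, so S is even. *)
Lemma half_sum_even : ~~ odd (sum_nonmult (v %/ t) v./2).
Proof.
have counted : \sum_(y < v) small_part v y * pm_count v A y =
    lam * \sum_(y < v) (if inJ v t y then 0 else small_part v y).
  rewrite big_distrr; apply: eq_bigr => y _ /=; rewrite pm_countE //.
  by case: ifP; rewrite ?muln0 // mulnC.
have := weighted_pm_count A (small_part v) v_gt0.
rewrite counted small_parts_double sum_small_nonJ // => /(congr1 odd).
by rewrite oddM lam_odd odd_double /= => ->.
Qed.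

End HeffterParity.

Lemma zrep_odd (v x : nat) : ~~ odd v -> odd (x %% v) -> (2 %| (zrep v x - 1)%R)%Z.
Proof.
move=> even_v odd_x; apply/dvdzP; rewrite /zrep.
have := odd_double_half (x %% v); have := odd_double_half v.
rewrite odd_x (negbTE even_v) /= => ev ex.
case: leqP => _; last exists (Posz (x %% v)./2 - Posz v./2)%R.
  by exists (Posz (x %% v)./2); lia.
lia.
Qed.

Lemma zero_sum_odd_even (I : finType) (v : nat) (c : I -> option nat) :
  ~~ odd v -> (forall j x, c j = Some x -> odd (x %% v)) ->
  (\sum_j oapp (zrep v) 0 (c j) = 0)%R -> ~~ odd #|[set j | c j != None]|.
Proof.
move=> even_v odd_entries sum0.
have two_dvd : (2 %| (\sum_j (oapp (zrep v) 0 (c j) - (c j != None)%:R))%R)%Z.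
  apply: rpred_sum => j _; case cj: (c j) => [x|] /=; last by rewrite subr0.
  exact: zrep_odd (odd_entries _ _ cj).
move: two_dvd; rewrite sumrB sum0 sub0r.
have -> : (\sum_j (c j != None)%:R)%R = Posz #|[set j | c j != None]|.
  rewrite -natz cardsE -sum1_card natr_sum [RHS]big_mkcond; apply: eq_bigr => j _.
  by rewrite unfold_in /=; case: (c j).
by rewrite dvdzE abszN absz_nat dvdn2.
Qed.

Theorem proposition4p3 (m n s k lam t : nat) :
  0 < m -> 0 < n -> 0 < s -> 0 < k -> 0 < lam -> 0 < t ->
  lam %| 2 * n * k -> t %| (2 * n * k) %/ lam ->
  odd lam ->
  (exists A : 'I_m -> 'I_n -> option nat, is_integer_heffter s k lam t A) ->
  [/\ (t %| (n * k) %/ lam ->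
         ((n * k) %/ lam) %% 4 = 0 \/
         (((n * k) %/ lam + t) %% 4 = 0 /\
          (((n * k) %/ lam) %% 4 = 1 \/ ((n * k) %/ lam) %% 4 = 3))),
      (t = (2 * n * k) %/ lam -> ~~ odd s /\ ~~ odd k) &
      (t <> (2 * n * k) %/ lam -> ~~ (t %| (n * k) %/ lam) ->
         ((2 * n * k) %/ lam + t) %% 8 = 0)].
Proof.
move=> m_gt0 n_gt0 _ _ _ t_gt0 lam_dvd t_dvd lam_odd [A [[rows cols _ pmc _] rowz colz]].
set h := n * k %/ lam.
have e2h : 2 * n * k %/ lam = h.*2.
  have : lam %| n * k by rewrite -(@Gauss_dvdr lam 2) ?coprimen2 // mulnA.
  by move=> lam_dvd_nk; rewrite -mulnA -muln_divA // mul2n.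
rewrite e2h in t_dvd *.
have ev : hv n k lam t = h.*2 + t by rewrite /hv e2h.
have v_gt0 : 0 < hv n k lam t by rewrite ev addn_gt0 t_gt0 orbT.
have := half_sum_even v_gt0 lam_odd pmc rowz; rewrite ev => even_S.
split=> [t_dvd_h | eth | _ t_ndvd_h];
  [exact: even_sum_divisible | | exact: even_sum_nondivisible].
have J_even : hv n k lam t %/ t = 2.
  by rewrite ev -eth addnn -muln2 mulKn.
have odd_entries := entries_odd v_gt0 pmc J_even.
have even_v : ~~ odd (hv n k lam t) by rewrite ev -eth addnn odd_double.
split; [rewrite -(rows (Ordinal m_gt0)) | rewrite -(cols (Ordinal n_gt0))].
  exact: zero_sum_odd_even even_v (odd_entries _) (rowz _).
exact: zero_sum_odd_even even_v (fun i => odd_entries i _) (colz _).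
Qed.
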